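(* Let $\mathcal{G}$ be a DAG and let $\mathbf{A}$ and $\mathbf{B}$ be disjoint vertex sets. Then there exists a unique subset $\mathbf{C}$ of $\mathbf{B}$ such that $\mathbf{A}\perp\!\!\!\perp_{\mathcal{G}}\mathbf{B}\setminus\mathbf{C}\mid\mathbf{C}$ and such that no strict subset $\mathbf{C}'$ of $\mathbf{C}$ satisfies $\mathbf{A}\perp\!\!\!\perp_{\mathcal{G}}\mathbf{B}\setminus\mathbf{C}'\mid\mathbf{C}'$.
   Context: $\mathbf{U}\perp\!\!\!\perp_{\mathcal{G}}\mathbf{W}\mid\mathbf{Z}$ denotes d-separation in the DAG $\mathcal{G}$ (with the convention that the statement is trivially true when $\mathbf{W}=\emptyset$). *)

From mathcomp Require Import all_boot.
Set Implicit Arguments. Unset Strict Implicit. Unset Printing Implicit Defensive.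

Section DSep.
Variable V : finType.
Variable e : rel V.

(* acyclicity: no edge x -> y with a directed path back from y to x
   (this also rules out self-loops, since connect is reflexive) *)
Definition dag : Prop := forall x y, e x y -> ~~ connect e y x.

Definition adj (x y : V) : bool := e x y || e y x.

Definition desc (x y : V) : bool := connect e x y.

Definition blocks_triple (Z : {set V}) (x y z : V) : bool :=
  if e x y && e z y then ~~ [exists w in Z, desc y w] else y \in Z.

Definition blocked (Z : {set V}) (p : seq V) : Prop :=
  exists (p1 p2 : seq V) (x y z : V),
    p = p1 ++ [:: x; y; z] ++ p2 /\ blocks_triple Z x y z.

(* d-separation  A _||_ W | Z : every path (sequence of distinct vertices,
   consecutive ones adjacent) from a vertex in A to a vertex in W is blocked
   by Z.  Trivially true when W (or A) is empty. *)
Definition dsep (A W Z : {set V}) : Prop :=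
  forall (a : V) (s : seq V), a \in A -> last a s \in W ->
    uniq (a :: s) -> path adj a s -> blocked Z (a :: s).

End DSep.

(* The admissible sets, i.e. the C \subset B with A _||_ B :\: C | C, contain
   B and, because A and B are disjoint, are closed under intersection.  Take a
   path from A to B :\: (C1 :&: C2) and cut it at its first vertex b in
   B :\: (C1 :&: C2); b avoids some Ci, so this prefix is blocked by Ci, and the
   blocking vertex is either a collider (still blocked by the smaller set
   C1 :&: C2) or an interior vertex of Ci which, lying in B before b, must lie
   in C1 :&: C2.  A family of subsets of B containing B and closed under
   intersection has exactly one minimal member. *)
From Stdlib Require Import ClassicalEpsilon.
From mathcomp Require Import all_boot.

Set Implicit Arguments.
Unset Strict Implicit.
Unset Printing Implicit Defensive.

Lemma ex_minimal_subset (T : finType) (P : {set T} -> Prop) (B : {set T}) :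
  P B ->
  exists C : {set T},
    C \subset B /\ P C /\ forall C' : {set T}, C' \proper C -> ~ P C'.
Proof.
move=> PB.
pose Pb := [pred C : {set T} | is_left (excluded_middle_informative (P C))].
have PbP (C : {set T}) : reflect (P C) (Pb C).
  by rewrite /Pb /=; case: excluded_middle_informative => h; constructor.
have [C /minsetP[/PbP PC minC] CB] := minset_exists (introT (PbP B) PB).
exists C; split=> //; split=> // C'.
rewrite properEneq => /andP[neqC'C C'C] /PbP PC'.
by rewrite (minC C' PC' C'C) eqxx in neqC'C.
Qed.

Lemma ex_unique_minimal_subset (T : finType) (P : {set T} -> Prop)
    (B : {set T}) :
  P B ->
  (forall C1 C2 : {set T}, C1 \subset B -> C2 \subset B -> P C1 -> P C2 ->
     P (C1 :&: C2)) ->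
  exists! C : {set T},
    C \subset B /\ P C /\ forall C' : {set T}, C' \proper C -> ~ P C'.
Proof.
move=> PB PI; have [C [CB [PC minC]]] := ex_minimal_subset PB.
exists C; split=> // C' [C'B [PC' minC']].
have PCC' := PI _ _ CB C'B PC PC'.
have minimal_meet (D X : {set T}) :
    (forall D' : {set T}, D' \proper D -> ~ P D') -> P (D :&: X) ->
    D :&: X = D.
  by move=> minD PDX; apply/eqP; rewrite eqEproper subsetIl; apply/negP=> /minD.
rewrite -(minimal_meet C C' minC PCC') setIC.
by rewrite (minimal_meet C' C minC') // setIC.
Qed.

Lemma mem_rcons_mid_triple (T : eqType) (p1 p2 l : seq T) (x y z b : T) :
  p1 ++ [:: x, y, z & p2] = rcons l b -> y \in l.
Proof.
elim: p1 l => [|c p1 IH] [|u l] //=.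
- case: l => [|v l] /=; first by case.
  by case=> _ ->; rewrite !inE eqxx orbT.
- by case: p1 {IH} => [|? [|? ?]].
- by case=> _ /IH yl; rewrite inE yl orbT.
Qed.

Section DSepIntersection.
Variables (V : finType) (e : rel V).

Lemma dsep_set0 (A Z : {set V}) : dsep e A set0 Z.
Proof. by move=> a s _; rewrite inE. Qed.

Lemma blocked_cat (Z : {set V}) (p t : seq V) :
  blocked e Z p -> blocked e Z (p ++ t).
Proof.
case=> p1 [p2 [x [y [z [-> blocks]]]]].
by exists p1, (p2 ++ t), x, y, z; rewrite -!catA.
Qed.

Lemma blocks_triple_sub (C D : {set V}) (x y z : V) :
  D \subset C -> (y \in C -> y \in D) ->
  blocks_triple e C x y z -> blocks_triple e D x y z.
Proof.
rewrite /blocks_triple => DC yCD; case: ifP => // _.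
apply: contra => /existsP[w /andP[wD yw]].
by apply/existsP; exists w; rewrite (subsetP DC).
Qed.

Variables (A B : {set V}).
Hypothesis disjAB : [disjoint A & B].

Lemma dsep_first_exit_blocked (C D : {set V}) (a b : V) (r : seq V) :
  C \subset B -> D \subset C -> dsep e A (B :\: C) C ->
  a \in A -> b \in B :\: C -> ~~ has (mem (B :\: D)) r ->
  uniq (a :: rcons r b) -> path (adj e) a (rcons r b) ->
  blocked e D (a :: rcons r b).
Proof.
move=> CB DC sepC aA bBC r_out uniq_ab path_ab.
have := sepC a (rcons r b) aA; rewrite last_rcons => /(_ bBC uniq_ab path_ab).
case=> p1 [p2 [x [y [z [def_p blocks]]]]].
exists p1, p2, x, y, z; split=> //; apply: blocks_triple_sub blocks => // yC.
have yB : y \in B by apply: (subsetP CB).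
have : y \in a :: r by apply: (@mem_rcons_mid_triple _ p1 p2 _ x y z b).
rewrite inE => /predU1P[ya | yr].
  by rewrite ya (disjointFr disjAB aA) in yB.
by apply: contraNT r_out => yND; apply/hasP; exists y; rewrite // !inE yND.
Qed.

Lemma dsep_setI (C1 C2 : {set V}) :
  C1 \subset B -> C2 \subset B ->
  dsep e A (B :\: C1) C1 -> dsep e A (B :\: C2) C2 ->
  dsep e A (B :\: (C1 :&: C2)) (C1 :&: C2).
Proof.
move=> C1B C2B sep1 sep2 a s aA last_s uniq_s path_s.
have exit_s : has (mem (B :\: (C1 :&: C2))) s.
  case: s last_s {uniq_s path_s} => [|u s] last_s.
    by rewrite /= inE (disjointFr disjAB aA) andbF in last_s.
  by apply/hasP; exists (last u s); rewrite ?mem_last.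
case/split_find: exit_s uniq_s path_s => b r t bBC r_out.
rewrite -cat_cons cat_uniq cat_path => /andP[uniq_rb _] /andP[path_rb _].
apply: blocked_cat; move: bBC; rewrite !inE negb_and => /andP[].
case/orP=> [bC1 | bC2] bB.
- by apply: (dsep_first_exit_blocked C1B _ sep1) => //;
    [exact: subsetIl | rewrite !inE bC1].
- by apply: (dsep_first_exit_blocked C2B _ sep2) => //;
    [exact: subsetIr | rewrite !inE bC2].
Qed.

End DSepIntersection.

Theorem lemma7 (V : finType) (e : rel V) (Hdag : dag e) (A B : {set V})
    (HAB : [disjoint A & B]) :
  exists! C : {set V},
    C \subset B /\ dsep e A (B :\: C) C /\
    (forall C' : {set V}, C' \proper C -> ~ dsep e A (B :\: C') C').
Proof.
apply: ex_unique_minimal_subset; first by rewrite setDv; apply: dsep_set0.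
exact: dsep_setI.
Qed.
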